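(* If $i:A\to B$ is a seminormalization of a monoid $A$ and $f:A\to C$ is any monoid map with $C$ seminormal, then there is a unique monoid map $g:B\to C$ with $g\circ i=f$. In particular, a seminormalization of a monoid is unique up to unique isomorphism.
   Context: A monoid is a pointed commutative monoid (basepoint $0$ with $0\cdot a=0$, identity $1$); maps preserve $0$, $1$, multiplication. $A$ is reduced if $a^2=b^2$ and $a^3=b^3$ imply $a=b$; $A_{\mathrm{red}}$ is the quotient of $A$ by the congruence $a\sim b$ iff $a^n=b^n$ for all $n\gg0$. $A$ is seminormal if it is reduced and whenever $x^3=y^2$ there is $z\in A$ with $x=z^2$, $y=z^3$. A seminormalization of $A$ is a map $A\to B$ with $B$ seminormal such that $A_{\mathrm{red}}\to B$ is injective and for every $b\in B$, $b^n\in A_{\mathrm{red}}$ for all $n\gg0$. *)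

From Stdlib Require Import Arith.

Record pmonoid := PMonoid {
  carrier :> Type;
  mul : carrier -> carrier -> carrier;
  one : carrier;
  zero : carrier;
  mulA : forall a b c, mul a (mul b c) = mul (mul a b) c;
  mulC : forall a b, mul a b = mul b a;
  mul1m : forall a, mul one a = a;
  mul0m : forall a, mul zero a = zero
}.

Arguments mul {_} _ _.
Arguments one {_}.
Arguments zero {_}.

Fixpoint mpow {A : pmonoid} (a : A) (n : nat) : A :=
  match n with
  | 0 => one
  | S k => mul a (mpow a k)
  end.

Definition is_hom {A B : pmonoid} (f : A -> B) : Prop :=
  f zero = zero /\ f one = one /\ (forall a b, f (mul a b) = mul (f a) (f b)).

(* a ~ b  iff  a^n = b^n for all n >> 0 (the congruence defining A_red) *)
Definition red_equiv {A : pmonoid} (a b : A) : Prop :=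
  exists N, forall n, N <= n -> mpow a n = mpow b n.

Definition reduced (A : pmonoid) : Prop :=
  forall a b : A, mpow a 2 = mpow b 2 -> mpow a 3 = mpow b 3 -> a = b.

Definition seminormal (A : pmonoid) : Prop :=
  reduced A /\
  forall x y : A, mpow x 3 = mpow y 2 ->
    exists z : A, x = mpow z 2 /\ y = mpow z 3.

(* i : A -> B is a seminormalization: i is a monoid map, B is seminormal,
   the induced map A_red -> B is injective (i a = i b only if a ~ b), and
   every b in B has b^n in (the image of) A_red for all n >> 0. *)
Definition seminormalization {A B : pmonoid} (i : A -> B) : Prop :=
  is_hom i /\ seminormal B /\
  (forall a a' : A, i a = i a' -> red_equiv a a') /\
  (forall b : B, exists N, forall n, N <= n -> exists a : A, i a = mpow b n).

Definition is_iso {B C : pmonoid} (g : B -> C) : Prop :=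
  is_hom g /\ exists h : C -> B, is_hom h /\
    (forall b, h (g b) = b) /\ (forall c, g (h c) = c).

(** Given [b] in [B], eventually [b ^ n = i a_n]; the values [e n := f a_n] do
    not depend on the choice of [a_n] (since [C] is reduced) and satisfy
    [e n * e m = e (n + m)] for large [n, m].  Seminormality of [C] lowers the
    threshold of such an eventually multiplicative sequence one step at a time
    (an element [z] with [z ^ 2 = e (2 M)], [z ^ 3 = e (3 M)] serves as the new
    [e M]) until [e] is the sequence of powers of one element [c]; then
    [g b := c].  Uniqueness up to isomorphism is the usual consequence of the
    universal property. *)
From Stdlib Require Import Arith Lia ClassicalEpsilon.

Lemma mulACA {A : pmonoid} (a b c d : A) :
  mul (mul a b) (mul c d) = mul (mul a c) (mul b d).
Proof.
  rewrite <- (mulA _ a b (mul c d)), (mulA _ b c d), (mulC _ b c).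
  now rewrite <- (mulA _ c b d), mulA.
Qed.

Lemma mpowD {A : pmonoid} (x : A) n m : mpow x (n + m) = mul (mpow x n) (mpow x m).
Proof. induction n; simpl. - now rewrite mul1m. - now rewrite IHn, mulA. Qed.

Lemma mpowMn {A : pmonoid} (x y : A) n : mpow (mul x y) n = mul (mpow x n) (mpow y n).
Proof. induction n; simpl. - now rewrite mul1m. - now rewrite IHn, mulACA. Qed.

Lemma mpowM {A : pmonoid} (x : A) m k : mpow (mpow x m) k = mpow x (m * k).
Proof.
  induction k; simpl.
  - now rewrite Nat.mul_0_r.
  - now rewrite IHk, Nat.mul_succ_r, mpowD, mulC.
Qed.

Lemma mpow1 {A : pmonoid} (x : A) : mpow x 1 = x.
Proof. simpl. now rewrite mulC, mul1m. Qed.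

Lemma mpow_zero {A : pmonoid} n : 1 <= n -> mpow (@zero A) n = zero.
Proof. destruct n as [|n]; [lia|]. intros _. apply mul0m. Qed.

Lemma mpow_one {A : pmonoid} n : mpow (@one A) n = one.
Proof. induction n; simpl; [reflexivity|]. now rewrite IHn, mul1m. Qed.

Lemma hom_mpow {A B : pmonoid} (f : A -> B) x n : is_hom f -> f (mpow x n) = mpow (f x) n.
Proof.
  intros [_ [f1 fM]]. induction n; simpl.
  - exact f1.
  - now rewrite fM, IHn.
Qed.

Lemma is_hom_id {A : pmonoid} : is_hom (fun a : A => a).
Proof. repeat split. Qed.

Lemma is_hom_comp {A B C : pmonoid} (u : A -> B) (v : B -> C) :
  is_hom u -> is_hom v -> is_hom (fun a => v (u a)).
Proof.
  intros [u0 [u1 uM]] [v0 [v1 vM]]. repeat split.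
  - now rewrite u0, v0.
  - now rewrite u1, v1.
  - intros a b. now rewrite uM, vM.
Qed.

(* Two elements with the same [n]-th powers for [n >= N.+1] have the same
   [N]-th powers, because [N.+1 <= 2 N, 3 N] for [N >= 1]. *)
Lemma reduced_eventually_eq {C : pmonoid} (x y : C) N :
  reduced C -> (forall n, N <= n -> mpow x n = mpow y n) -> x = y.
Proof.
  intros Hred. revert N. induction N as [|N IHN]; intros Hxy.
  - rewrite <- (mpow1 x), <- (mpow1 y). apply Hxy; lia.
  - apply IHN. intros n Hn. destruct (Nat.eq_dec n N) as [->|]; [|apply Hxy; lia].
    destruct N as [|N]; [reflexivity|].
    apply Hred; rewrite !mpowM; apply Hxy; lia.
Qed.

Definition multiplicative_from {C : pmonoid} (N : nat) (e : nat -> C) : Prop :=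
  forall n m, N <= n -> N <= m -> mul (e n) (e m) = e (n + m).

Section EventuallyMultiplicative.
Variable C : pmonoid.
Hypothesis HC : seminormal C.

Lemma multiplicative_from_pow N (e : nat -> C) n k :
  multiplicative_from N e -> N <= n -> mpow (e n) (S k) = e (n * S k).
Proof.
  intros He Hn. induction k as [|k IHk].
  - now rewrite mpow1, Nat.mul_1_r.
  - change (mpow (e n) (S (S k))) with (mul (e n) (mpow (e n) (S k))).
    rewrite IHk, He by nia. f_equal. nia.
Qed.

Lemma multiplicative_from_lower M (e : nat -> C) :
  1 <= M -> multiplicative_from (S M) e ->
  exists e', multiplicative_from M e' /\ forall n, S M <= n -> e' n = e n.
Proof.
  destruct HC as [Hred Hsn]. intros HM He.
  assert (Hpow : forall n k, S M <= n -> mpow (e n) (S k) = e (n * S k))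
    by (intros; now apply (multiplicative_from_pow (S M))).
  assert (H23 : mpow (e (2 * M)) 3 = mpow (e (3 * M)) 2).
  { rewrite !Hpow by lia. f_equal; lia. }
  destruct (Hsn _ _ H23) as [z [Hz2 Hz3]].
  assert (Hshift : forall m, S M <= m -> mul z (e m) = e (M + m)).
  { intros m Hm. apply Hred; rewrite mpowMn.
    - rewrite <- Hz2, !Hpow, He by nia. f_equal; lia.
    - rewrite <- Hz3, !Hpow, He by nia. f_equal; lia. }
  exists (fun n => if Nat.eqb n M then z else e n). split.
  - intros n m Hn Hm.
    destruct (Nat.eqb_spec n M), (Nat.eqb_spec m M), (Nat.eqb_spec (n + m) M);
      subst; try lia.
    + transitivity (mpow z 2); [simpl; now rewrite (mulC _ z one), mul1m|].
      rewrite <- Hz2. f_equal; lia.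
    + apply Hshift; lia.
    + rewrite mulC, Nat.add_comm. apply Hshift; lia.
    + apply He; lia.
  - intros n Hn. destruct (Nat.eqb_spec n M); [lia|reflexivity].
Qed.

Lemma multiplicative_from_root N (e : nat -> C) :
  multiplicative_from (S N) e -> exists c, forall n, S N <= n -> mpow c n = e n.
Proof.
  revert e. induction N as [|N IHN]; intros e He.
  - exists (e 1). intros n Hn.
    destruct n as [|n]; [lia|].
    rewrite (multiplicative_from_pow 1 e 1 n He) by lia. f_equal; lia.
  - destruct (multiplicative_from_lower (S N) e) as [e' [He' Hee']]; [lia|exact He|].
    destruct (IHN e' He') as [c Hc]. exists c. intros n Hn.
    rewrite Hc by lia. apply Hee'; lia.
Qed.

End EventuallyMultiplicative.

(* [c] is a candidate for [g b]: the powers of [c] are eventually forced by [f]. *)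
Definition extends_at {A B C : pmonoid} (i : A -> B) (f : A -> C) (b : B) (c : C) : Prop :=
  exists N, forall n, N <= n -> forall a, i a = mpow b n -> f a = mpow c n.

Definition extension {A B C : pmonoid} (i : A -> B) (f : A -> C) (b : B) : C :=
  epsilon (inhabits one) (extends_at i f b).

Section Extension.
Variables (A B C : pmonoid) (i : A -> B) (f : A -> C).
Hypotheses (Hi : seminormalization i) (Hf : is_hom f) (HC : seminormal C).

Lemma hom_compat a a' : i a = i a' -> f a = f a'.
Proof.
  intros Haa'. destruct Hi as [_ [_ [Hker _]]]. destruct (Hker _ _ Haa') as [N HN].
  apply (reduced_eventually_eq _ _ N (proj1 HC)). intros n Hn.
  rewrite <- !hom_mpow by exact Hf. now rewrite HN.
Qed.

Lemma extends_at_exists b : exists c, extends_at i f b c.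
Proof.
  destruct Hi as [[_ [_ iM]] [_ [_ Hroot]]]. destruct (Hroot b) as [N HN].
  set (pre n := epsilon (inhabits one) (fun a => N <= n -> i a = mpow b n)).
  assert (Hpre : forall n, N <= n -> i (pre n) = mpow b n).
  { intros n. apply (epsilon_spec (inhabits one) (fun a => N <= n -> i a = mpow b n)).
    destruct (le_lt_dec N n) as [Hn|Hn].
    - destruct (HN n Hn) as [a Ha]. now exists a.
    - exists one. lia. }
  assert (He : multiplicative_from (S N) (fun n => f (pre n))).
  { intros n m Hn Hm. destruct Hf as [_ [_ fM]]. rewrite <- fM. apply hom_compat.
    now rewrite iM, !Hpre, mpowD by lia. }
  destruct (multiplicative_from_root C HC N _ He) as [c Hc].
  exists c, (S N). intros n Hn a Ha.
  rewrite Hc by lia. apply hom_compat. now rewrite Ha, Hpre by lia.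
Qed.

Lemma extends_at_unique b c c' : extends_at i f b c -> extends_at i f b c' -> c = c'.
Proof.
  intros [N1 H1] [N2 H2]. destruct Hi as [_ [_ [_ Hroot]]].
  destruct (Hroot b) as [N0 HN0].
  apply (reduced_eventually_eq _ _ (N1 + N2 + N0) (proj1 HC)). intros n Hn.
  destruct (HN0 n) as [a Ha]; [lia|].
  now rewrite <- (H1 n ltac:(lia) a Ha), <- (H2 n ltac:(lia) a Ha).
Qed.

Lemma extension_spec b : extends_at i f b (extension i f b).
Proof. exact (epsilon_spec (inhabits one) _ (extends_at_exists b)). Qed.

Lemma extension_eq b c : extends_at i f b c -> extension i f b = c.
Proof. apply extends_at_unique, extension_spec. Qed.

Lemma extension_comp a : extension i f (i a) = f a.
Proof.
  apply extension_eq. exists 0. intros n _ a' Ha'.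
  destruct Hi as [Hihom _].
  rewrite <- (hom_mpow f) by exact Hf. apply hom_compat.
  now rewrite Ha', (hom_mpow i).
Qed.

Lemma extension_hom : is_hom (extension i f).
Proof.
  destruct Hi as [[i0 [i1 iM]] [_ [_ Hroot]]]. destruct Hf as [f0 [f1 fM]].
  split; [|split].
  - apply extension_eq. exists 1. intros n Hn a Ha.
    rewrite (mpow_zero (A := B)) in Ha by lia. rewrite (mpow_zero (A := C)) by lia. rewrite <- f0.
    apply hom_compat. now rewrite Ha, i0.
  - apply extension_eq. exists 0. intros n _ a Ha.
    rewrite (mpow_one (A := B)) in Ha. rewrite (mpow_one (A := C)). rewrite <- f1.
    apply hom_compat. now rewrite Ha, i1.
  - intros b1 b2. apply extension_eq.
    destruct (extension_spec b1) as [N1 H1], (extension_spec b2) as [N2 H2].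
    destruct (Hroot b1) as [M1 K1], (Hroot b2) as [M2 K2].
    exists (N1 + N2 + M1 + M2). intros n Hn a Ha.
    destruct (K1 n) as [a1 Ha1]; [lia|]. destruct (K2 n) as [a2 Ha2]; [lia|].
    transitivity (f (mul a1 a2)).
    + apply hom_compat. now rewrite Ha, iM, Ha1, Ha2, mpowMn.
    + now rewrite fM, mpowMn, (H1 n ltac:(lia) a1 Ha1), (H2 n ltac:(lia) a2 Ha2).
Qed.

Lemma extension_unique (g : B -> C) :
  is_hom g -> (forall a, g (i a) = f a) -> forall b, g b = extension i f b.
Proof.
  intros Hg Hgi b. symmetry. apply extension_eq.
  destruct Hi as [_ [_ [_ Hroot]]]. destruct (Hroot b) as [N _].
  exists N. intros n _ a Ha. now rewrite <- Hgi, Ha, hom_mpow.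
Qed.

End Extension.

Lemma seminormalization_universal {A B C : pmonoid} (i : A -> B) (f : A -> C) :
  seminormalization i -> is_hom f -> seminormal C ->
  exists g : B -> C,
    is_hom g /\ (forall a, g (i a) = f a) /\
    (forall g' : B -> C, is_hom g' -> (forall a, g' (i a) = f a) ->
       forall b, g' b = g b).
Proof.
  intros Hi Hf HC. exists (extension i f). split; [|split].
  - now apply extension_hom.
  - now apply extension_comp.
  - now apply extension_unique.
Qed.

Lemma seminormalization_endo_id {A B : pmonoid} (i : A -> B) (h : B -> B) :
  seminormalization i -> is_hom h -> (forall a, h (i a) = i a) -> forall b, h b = b.
Proof.
  intros Hi Hh Hhi b. pose proof Hi as [Hihom [HB _]].
  rewrite (extension_unique _ _ _ i i Hi Hihom HB h Hh Hhi).
  symmetry. now apply (extension_unique _ _ _ i i Hi Hihom HB (fun x => x) is_hom_id).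
Qed.

Theorem lemma1p11 :
  (forall (A B C : pmonoid) (i : A -> B) (f : A -> C),
      seminormalization i -> is_hom f -> seminormal C ->
      exists g : B -> C,
        is_hom g /\ (forall a, g (i a) = f a) /\
        (forall g' : B -> C, is_hom g' -> (forall a, g' (i a) = f a) ->
           forall b, g' b = g b))
  /\
  (forall (A B1 B2 : pmonoid) (i1 : A -> B1) (i2 : A -> B2),
      seminormalization i1 -> seminormalization i2 ->
      exists g : B1 -> B2,
        is_iso g /\ (forall a, g (i1 a) = i2 a) /\
        (forall g' : B1 -> B2, is_iso g' -> (forall a, g' (i1 a) = i2 a) ->
           forall b, g' b = g b)).
Proof.
  split; [intros; now apply seminormalization_universal|].
  intros A B1 B2 i1 i2 H1 H2.
  pose proof H1 as [Hi1 [HB1 _]]. pose proof H2 as [Hi2 [HB2 _]].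
  destruct (seminormalization_universal i1 i2 H1 Hi2 HB2) as [g [Hg [Hgi Hgu]]].
  destruct (seminormalization_universal i2 i1 H2 Hi1 HB1) as [h [Hh [Hhi _]]].
  exists g. split; [split; [exact Hg|]|split; [exact Hgi|]].
  - exists h. split; [exact Hh|split].
    + apply (seminormalization_endo_id i1); [exact H1|now apply is_hom_comp|].
      intro a. now rewrite Hgi, Hhi.
    + apply (seminormalization_endo_id i2); [exact H2|now apply is_hom_comp|].
      intro a. now rewrite Hhi, Hgi.
  - intros g' [Hg' _]. now apply Hgu.
Qed.
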